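(* Let $a,b\in\mathbb{R}$, let $w(x)=ax+b$, and let $\mathcal{I}\subset\mathbb{R}$ be the set of points where $w>0$. For $\sigma>0$ and $x,y\in\mathbb{R}$ with $w(y)\neq 0$ define the one-step transition density $$p_1(x\mid y,\sigma,a,b)=\frac{k_\sigma(x;y)\,w(x)}{\int_{\mathbb{R}}k_\sigma(z;y)\,w(z)\,\mathrm{d}z},$$ where $k_\sigma(\cdot;y)$ is the Gaussian density with mean $y$ and standard deviation $\sigma$, and for $n\in\mathbb{N}$ define the $n$-step density by the Chapman–Kolmogorov formula $$p_n(x_n\mid x_0,\sigma,a,b)=\int_{\mathbb{R}^{n-1}}\prod_{k=1}^{n}p_1(x_k\mid x_{k-1},\sigma,a,b)\,\mathrm{d}x_1\cdots\mathrm{d}x_{n-1}.$$ Then, restricted to the domain $\mathcal{I}$, the movement model is robust of degree $n$ for every $n\in\mathbb{N}$ with parameter transformation $g_n(\sigma,a,b)=(\sqrt{n}\,\sigma,a,b)$; that is, for every $n\in\mathbb{N}$, every $\sigma>0$ and all $x,y\in\mathcal{I}$, $$p_n(x\mid y,\sigma,a,b)=p_1(x\mid y,\sqrt{n}\,\sigma,a,b).$$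
   Context: This concerns a one-dimensional discrete-time Markov movement model (locations $X_t\in\mathbb{R}$ at times $0,\tau,2\tau,\dots$) whose one-step transition density is a Gaussian movement kernel multiplied by a spatial weighting function $w$ and renormalized, as written in the claim. A model with one-step density $p_1(\cdot\mid\cdot,\bm\theta)$ and $n$-step density $p_n$ is called robust of degree $n$ if there is an injective map $g_n$ on the parameter space with $p_n(x\mid y,\bm\theta)=p_1(x\mid y,g_n(\bm\theta))$ for all $x,y$ (here for all $x,y$ in the restricted domain). *)

From HB Require Import structures.
From mathcomp Require Import all_boot all_order all_algebra.
From mathcomp Require Import all_classical all_reals all_analysis.
Set Implicit Arguments. Unset Strict Implicit. Unset Printing Implicit Defensive.
Import Order.TTheory GRing.Theory Num.Theory.
Import numFieldNormedType.Exports.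
Local Open Scope classical_set_scope.
Local Open Scope ring_scope.

Definition wlin {R : realType} (a b x : R) : R := a * x + b.

Definition kern {R : realType} (s y x : R) : R := normal_pdf y s x.

Definition p1 {R : realType} (s a b x y : R) : R :=
  kern s y x * wlin a b x /
  (\int[@lebesgue_measure R]_(z in [set: R]) (kern s y z * wlin a b z)).

(* iterated Lebesgue integral over R^m: integrates f (z_1 :: ... :: z_m :: [::])
   with respect to z_1, ..., z_m (innermost z_m) *)
Fixpoint iter_int {R : realType} (m : nat) (f : seq R -> R) : R :=
  match m with
  | 0%N => f [::]
  | m'.+1 => \int[@lebesgue_measure R]_(z in [set: R])
               iter_int m' (fun s => f (z :: s))
  end.

Definition pn {R : realType} (n : nat) (s a b xn x0 : R) : R :=
  iter_int n.-1 (fun xs : seq R =>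
    let pts := x0 :: rcons xs xn in
    \prod_(k < n) p1 s a b (nth 0 pts k.+1) (nth 0 pts k)).

From HB Require Import structures.
From mathcomp Require Import all_boot all_order all_algebra.
From mathcomp Require Import all_classical all_reals all_analysis.
From mathcomp Require Import ring measurable_realfun.
Import Order.TTheory GRing.Theory Num.Theory.
Import numFieldNormedType.Exports.
Local Open Scope classical_set_scope.
Local Open Scope ring_scope.

(* Since the Gaussian kernel k_s(.; y) has mean y and w is affine,
   int k_s(z; y) w(z) dz = w(y), so p_1(x | y) = k_s(x; y) w(x) / w(y).  In the
   Chapman--Kolmogorov product the weights telescope to w(x_n) / w(x_0), and
   what remains is an n-fold convolution of Gaussian kernels, i.e. the kernel
   with variance n s^2. *)

Section normal_fun_first_moment.
Context {R : realType}.
Notation mu := (@lebesgue_measure R).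

Lemma is_derive_normal_fun (m s x : R) :
  is_derive x 1 (normal_fun m s) (normal_fun m s x * (- (x - m) / s ^+ 2)).
Proof.
have -> : normal_fun m s = expR \o (fun x => - (x - m) ^+ 2 / (s ^+ 2 *+ 2)) by [].
apply: is_derive_eq.
rewrite !scaler0 add0r !subr0 !scaler1 /=; congr (_ * _).
have [->|s0] := eqVneq s 0; first by rewrite expr0n /= mul0rn invr0 scale0r mulr0.
change ((s ^+ 2 *+ 2)^-1 * - (x - m + (x - m)) = - (x - m) / s ^+ 2).
by rewrite -mulr_natr; field.
Qed.

#[local] Existing Instance is_derive_normal_fun.

Lemma continuous_normal_fun (m s : R) : continuous (normal_fun m s).
Proof.
move=> x; apply/differentiable_continuous/derivable1_diffP.
by case: (is_derive_normal_fun m s x).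
Qed.

Lemma continuous_centered_normal_fun (m s : R) :
  continuous (fun x : R => (x - m) * normal_fun m s x).
Proof.
move=> x; apply: cvgM; last exact: continuous_normal_fun.
by apply: cvgB; [exact: cvg_id | exact: cvg_cst].
Qed.

Lemma cvgy_normal_fun (m s : R) : s != 0 -> normal_fun m s x @[x --> +oo] --> 0.
Proof.
move=> s0.
have -> : normal_fun m s = gauss_fun \o (fun x => (x - m) / Num.sqrt (s ^+ 2 *+ 2)).
  apply/funext => x; rewrite /normal_fun /gauss_fun /=; congr expR.
  by rewrite mulNr exprMn exprVn sqr_sqrtr ?pmulrn_lge0 ?sqr_ge0.
apply: (cvg_comp _ gauss_fun); last exact: cvg_gauss_fun.
apply/gt0_cvgMly; last exact: cvg_addrr.
by rewrite invr_gt0 sqrtr_gt0 pmulrn_lgt0// exprn_even_gt0.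
Qed.

Lemma integral_centered_normal_fun_itvy (m s : R) : s != 0 ->
  (\int[mu]_(x in `[m, +oo[) ((x - m) * normal_fun m s x)%:E = (s ^+ 2)%:E)%E.
Proof.
move=> s0.
have primitive (x : R) : is_derive x 1 (fun x => - s ^+ 2 * normal_fun m s x)
    ((x - m) * normal_fun m s x).
  apply: is_derive_eq.
  change (- s ^+ 2 * (normal_fun m s x * (- (x - m) / s ^+ 2))
    = (x - m) * normal_fun m s x).
  by field.
rewrite (@ge0_continuous_FTC2y _ _ (fun x => - s ^+ 2 * normal_fun m s x) _ 0).
- by rewrite /normal_fun subrr expr0n /= oppr0 mul0r expR0 mulr1 add0e opprK.
- by move=> x mx; rewrite mulr_ge0 ?subr_ge0 ?normal_fun_ge0.
- exact/continuous_subspaceT/continuous_centered_normal_fun.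
- rewrite -[X in _ --> X](mulr0 (- s ^+ 2)).
  by apply: cvgM; [exact: cvg_cst | exact: cvgy_normal_fun].
- by move=> x _; case: (primitive x).
- apply: cvg_at_right_filter.
  by apply: cvgM; [exact: cvg_cst | exact: continuous_normal_fun].
- by move=> x _; rewrite derive1E; apply: derive_val.
Qed.

Lemma integral_centered_normal_fun_itvNy (m s : R) : s != 0 ->
  (\int[mu]_(x in `]-oo, m]) ((m - x) * normal_fun m s x)%:E = (s ^+ 2)%:E)%E.
Proof.
move=> s0; rewrite -[in `]-oo, m]](opprK m).
rewrite (@ge0_integration_by_substitutionNy _ (fun x => (m - x) * normal_fun m s x)).
- rewrite -(@integral_centered_normal_fun_itvy (- m) s s0).
  apply: eq_integral => x _; congr EFin.
  by rewrite /normal_fun /= !opprK -opprD sqrrN [m + x]addrC.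
- apply: continuous_subspaceT => x.
  have -> : (fun x => (m - x) * normal_fun m s x)
      = -%R \o (fun x => (x - m) * normal_fun m s x).
    by apply/funext => y /=; rewrite -mulNr opprB.
  by apply: continuous_comp; [exact: continuous_centered_normal_fun | exact: oppr_continuous].
- move=> x; rewrite in_itv /= opprK => xm.
  by rewrite mulr_ge0 ?normal_fun_ge0 // subr_ge0 ltW.
Qed.

Variables (m s : R).
Hypothesis s0 : s != 0.

Let f x := (x - m) * normal_fun m s x.
Let B := `[m, +oo[%classic.
Let mB : measurable B := measurable_itv _.
Let mCB : measurable (~` B) := measurableC mB.
Let disjCB : [disjoint ~` B & B]. Proof. exact/disj_setPCr. Qed.
Let setTE : [set: R] = ~` B `|` B. Proof. by rewrite setvU. Qed.
Let measurable_f : measurable_fun [set: R] f.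
Proof. exact: continuous_measurable_fun (continuous_centered_normal_fun m s). Qed.

Let integral_negative_part : (\int[mu]_(x in ~` B) (- f x)%:E = (s ^+ 2)%:E)%E.
Proof.
rewrite setCitvr integral_itv_bndo_bndc; last first.
  apply/measurable_EFinP/measurable_funTS; exact: measurableT_comp.
rewrite -(integral_centered_normal_fun_itvNy m s s0).
by apply: eq_integral => x _; rewrite /f -mulNr opprB.
Qed.

Lemma integrable_centered_normal_fun :
  mu.-integrable [set: R] (EFin \o (fun x => (x - m) * normal_fun m s x)).
Proof.
apply/integrableP; split; first exact/measurable_EFinP.
rewrite setTE ge0_integral_setU //; last first.
  by rewrite -setTE; apply/measurableT_comp/measurable_EFinP.
rewrite (_ : (\int[mu]_(x in ~` B) `|(f x)%:E|)%E = (s ^+ 2)%:E); last first.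
  rewrite -integral_negative_part setCitvr.
  apply: eq_integral => x /set_mem /=; rewrite in_itv /= => xm.
  by rewrite ler0_norm // mulr_le0_ge0 ?normal_fun_ge0 // subr_le0 ltW.
rewrite (_ : (\int[mu]_(x in B) `|(f x)%:E|)%E = (s ^+ 2)%:E); last first.
  rewrite -(@integral_centered_normal_fun_itvy m s s0).
  apply: eq_integral => x; rewrite /B inE /= in_itv /= andbT => xm.
  by rewrite ger0_norm // mulr_ge0 ?normal_fun_ge0 // subr_ge0.
by rewrite -EFinD ltry.
Qed.

Lemma Rintegral_centered_normal_fun :
  \int[mu]_(x in [set: R]) ((x - m) * normal_fun m s x) = 0.
Proof.
have intf := integrable_centered_normal_fun.
rewrite setTE Rintegral_setU //; last by rewrite -setTE.
have -> : \int[mu]_(x in B) f x = s ^+ 2.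
  by rewrite /Rintegral integral_centered_normal_fun_itvy.
have -> : \int[mu]_(x in ~` B) f x = - s ^+ 2.
  transitivity (\int[mu]_(x in ~` B) (-1 * - f x)).
    by apply: eq_Rintegral => x _; rewrite mulN1r opprK.
  rewrite RintegralZl //.
    by rewrite /Rintegral integral_negative_part mulN1r.
  have intNf : mu.-integrable [set: R] (EFin \o (fun x => - f x)).
    by apply: eq_integrable (integrableN intf) => // x _; rewrite /= EFinN.
  exact: integrableS intNf.
by rewrite addNr.
Qed.

End normal_fun_first_moment.

Section gaussian_kernel.
Context {R : realType}.
Notation mu := (@lebesgue_measure R).

Lemma Rintegral_normal_pdf (m s : R) : \int[mu]_(z in [set: R]) normal_pdf m s z = 1.
Proof. by rewrite /Rintegral integral_normal_pdf. Qed.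

Lemma normal_peakE (s : R) : 0 < s -> normal_peak s = (s * Num.sqrt (pi *+ 2))^-1.
Proof.
by move=> s0; rewrite /normal_peak -mulrnAr sqrtrM ?sqr_ge0 // sqrtr_sqr gtr0_norm.
Qed.

Lemma Rintegral_normal_pdf_wlin (m s a b : R) : s != 0 ->
  \int[mu]_(z in [set: R]) (normal_pdf m s z * wlin a b z) = wlin a b m.
Proof.
move=> s0.
have intZ (k : R) (f : R -> R) : mu.-integrable [set: R] (EFin \o f) ->
    mu.-integrable [set: R] (EFin \o (fun x => k * f x)).
  by move=> /(integrableZl measurableT k); apply: eq_integrable => // x _ /=; rewrite EFinM.
transitivity (\int[mu]_(z in [set: R])
    (a * normal_peak s * ((z - m) * normal_fun m s z) + wlin a b m * normal_pdf m s z)).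
  by apply: eq_Rintegral => z _; rewrite normal_pdfE // /wlin; ring.
rewrite RintegralD //; last 2 first.
- by apply/intZ; exact: integrable_centered_normal_fun.
- exact/intZ/integrable_normal_pdf.
rewrite !RintegralZl //; last 2 first.
- exact: integrable_normal_pdf.
- exact: integrable_centered_normal_fun.
by rewrite Rintegral_centered_normal_fun // Rintegral_normal_pdf mulr0 add0r mulr1.
Qed.

Lemma p1E (s a b x y : R) : s != 0 ->
  p1 s a b x y = normal_pdf y s x * wlin a b x / wlin a b y.
Proof. by move=> s0; rewrite /p1 /kern Rintegral_normal_pdf_wlin. Qed.

Lemma normal_pdf_chain (s1 s2 u z x : R) : 0 < s1 -> 0 < s2 ->
  normal_pdf u s1 z * normal_pdf z s2 x =
  normal_pdf u (Num.sqrt (s1 ^+ 2 + s2 ^+ 2)) x *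
  normal_pdf ((u * s2 ^+ 2 + x * s1 ^+ 2) / (s1 ^+ 2 + s2 ^+ 2))
    (s1 * s2 / Num.sqrt (s1 ^+ 2 + s2 ^+ 2)) z.
Proof.
move=> s1p s2p; set S := Num.sqrt _.
have Q0 : 0 < s1 ^+ 2 + s2 ^+ 2 by rewrite addr_gt0 // exprn_gt0.
have S0 : 0 < S by rewrite sqrtr_gt0.
have t0 : 0 < s1 * s2 / S by rewrite !mulr_gt0 // invr_gt0.
have c0 : 0 < Num.sqrt (pi *+ 2 : R) by rewrite sqrtr_gt0 pmulrn_lgt0 // pi_gt0.
rewrite !normal_pdfE ?gt_eqF // !normal_peakE // mulrACA [in RHS]mulrACA.
congr (_ * _); first by field; rewrite ?gt_eqF.
rewrite /normal_fun -!expRD; congr expR.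
rewrite !exprMn exprVn !sqr_sqrtr ?ltW //.
by field; rewrite ?gt_eqF.
Qed.

End gaussian_kernel.

Lemma Rintegral_eq_setT_but1 {R : realType} (f g : R -> R) (r : R) :
  measurable_fun [set: R] g -> (forall z, z != r -> f z = g z) ->
  \int[@lebesgue_measure R]_(z in [set: R]) f z =
  \int[@lebesgue_measure R]_(z in [set: R]) g z.
Proof.
move=> mg fg.
have mTr : measurable ([set: R] `\ r) by exact: measurableD.
have fgTr : {in [set: R] `\ r, f =1 g}.
  by move=> z; rewrite inE => -[_ /eqP]; exact: fg.
have mfTr : measurable_fun ([set: R] `\ r) f.
  by apply: eq_measurable_fun (measurable_funTS mg) => z /fgTr.
rewrite /Rintegral -(integral_setD1 (r := r) (f := EFin \o f)) //.
rewrite -(integral_setD1 (r := r) (f := EFin \o g)) //.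
- by congr fine; apply: eq_integral => z /fgTr /= ->.
- exact/measurable_EFinP/measurable_funTS.
- exact/measurable_EFinP.
Qed.

Lemma wlin_neq0 {R : realType} (a b u z : R) :
  wlin a b u != 0 -> z != - b / a -> wlin a b z != 0.
Proof.
rewrite /wlin; have [->|a0] := eqVneq a 0; first by rewrite !mul0r.
move=> _; apply: contraNN => /eqP wz0; apply/eqP.
by rewrite -[b]subr0 -wz0; field.
Qed.

Lemma Rintegral_p1_p1 {R : realType} (s1 s2 a b c u x : R) : 0 < s1 -> 0 < s2 ->
  \int[@lebesgue_measure R]_(z in [set: R]) (c * p1 s1 a b z u * p1 s2 a b x z) =
  c * p1 (Num.sqrt (s1 ^+ 2 + s2 ^+ 2)) a b x u.
Proof.
move=> s1p s2p.
have S0 : 0 < Num.sqrt (s1 ^+ 2 + s2 ^+ 2) by rewrite sqrtr_gt0 addr_gt0 // exprn_gt0.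
set S := Num.sqrt _ in S0 *; set t := s1 * s2 / S.
set m := (u * s2 ^+ 2 + x * s1 ^+ 2) / (s1 ^+ 2 + s2 ^+ 2).
set w := wlin a b; rewrite p1E ?gt_eqF // -/w.
have [wu0|wu0] := eqVneq (w u) 0.
  rewrite wu0 invr0 !mulr0 -[RHS](mul0r (fine (@lebesgue_measure R [set: R]))).
  rewrite -Rintegral_cst //; apply: eq_Rintegral => z _.
  by rewrite p1E ?gt_eqF // -/w wu0 invr0 !mulr0 mul0r.
pose K := c * w x / w u * normal_pdf u S x.
rewrite (@Rintegral_eq_setT_but1 _ _ (fun z => K * normal_pdf m t z) (- b / a)).
- rewrite RintegralZl // ?Rintegral_normal_pdf ?mulr1 /K; last exact: integrable_normal_pdf.
  by field.
- by apply: measurable_funM => //; exact: measurable_normal_pdf.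
- move=> z zr; have wz0 : w z != 0 := @wlin_neq0 _ a b u z wu0 zr.
  rewrite !p1E ?gt_eqF // -/w.
  transitivity (c * w x / w u * (normal_pdf u s1 z * normal_pdf z s2 x)).
    by field; apply/andP.
  by rewrite normal_pdf_chain // /K -/S -/t -/m mulrA.
Qed.

Lemma eq_iter_int {R : realType} (m : nat) (f g : seq R -> R) :
  (forall xs, size xs = m -> f xs = g xs) -> iter_int m f = iter_int m g.
Proof.
elim: m f g => [|m IH] f g fg /=; first exact: fg.
by apply: eq_Rintegral => z _; apply: IH => xs sz; apply: fg; rewrite /= sz.
Qed.

(* Generalized for the induction: [c] absorbs the factors already integrated
   and [s'] the variance accumulated at the end of the chain. *)
Lemma iter_int_p1_chain {R : realType} (s a b x : R) (m : nat) : 0 < s ->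
  forall c u s' : R, 0 < s' ->
  iter_int m (fun xs => c *
    (\prod_(k < m) p1 s a b (nth 0 (u :: xs) k.+1) (nth 0 (u :: xs) k)) *
    p1 s' a b x (last u xs)) =
  c * p1 (Num.sqrt (s' ^+ 2 + m%:R * s ^+ 2)) a b x u.
Proof.
move=> s0; elim: m => [|m IH] c u s' s'0 /=.
  by rewrite big_ord0 mulr1 mul0r addr0 sqrtr_sqr gtr0_norm.
have S'0 : 0 < s' ^+ 2 + m%:R * s ^+ 2 by rewrite ltr_pwDl ?exprn_gt0 // mulr_ge0 ?sqr_ge0.
have sqrtS'0 : 0 < Num.sqrt (s' ^+ 2 + m%:R * s ^+ 2) by rewrite sqrtr_gt0.
transitivity (\int[@lebesgue_measure R]_(z in [set: R])
    (c * p1 s a b z u * p1 (Num.sqrt (s' ^+ 2 + m%:R * s ^+ 2)) a b x z)).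
  apply: eq_Rintegral => z _; rewrite -IH //.
  by apply: eq_iter_int => xs _; rewrite big_ord_recl /= !mulrA.
rewrite (Rintegral_p1_p1 _ _ a b c u x s0 sqrtS'0) sqr_sqrtr; last exact: ltW.
by congr (_ * p1 (Num.sqrt _) _ _ _ _); rewrite -natr1; ring.
Qed.

Lemma pnE {R : realType} (m : nat) (s a b x y : R) :
  pn m.+1 s a b x y = iter_int m (fun xs => 1 *
    (\prod_(k < m) p1 s a b (nth 0 (y :: xs) k.+1) (nth 0 (y :: xs) k)) *
    p1 s a b x (last y xs)).
Proof.
apply: eq_iter_int => xs sz /=; rewrite mul1r big_ord_recr /=.
have nth_rcons_head i : (i <= size xs)%N ->
    nth 0 (y :: rcons xs x) i = nth 0 (y :: xs) i.
  by move=> ixs; rewrite -rcons_cons nth_rcons /= ltnS ixs.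
congr (_ * _).
  by apply: eq_bigr => k _; rewrite nth_rcons sz ltn_ord nth_rcons_head // sz ltnW.
rewrite nth_rcons sz ltnn eqxx nth_rcons_head ?sz //.
by have := nth_last 0 (y :: xs); rewrite /= sz => ->.
Qed.

Theorem theorem1 (R : realType) (a b : R) (n : nat) (s : R) (x y : R) :
  (0 < n)%N -> 0 < s ->
  0 < wlin a b x -> 0 < wlin a b y ->
  pn n s a b x y = p1 (Num.sqrt (n%:R) * s) a b x y.
Proof.
case: n => [//|m] _ s0 _ _.
rewrite pnE (iter_int_p1_chain s a b x m s0 1 y s s0) mul1r.
have -> : s ^+ 2 + m%:R * s ^+ 2 = m.+1%:R * s ^+ 2 by rewrite -natr1; ring.
by rewrite sqrtrM ?ler0n ?sqrtr_sqr ?gtr0_norm.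
Qed.
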